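(* Let $\mathcal V$ be a congruence modular variety with difference term $d$, $A\in\mathcal V$ and $\alpha\in\operatorname{Con}A$ (arbitrary). Let $B=A(\alpha)/\Delta_{\alpha1}$ with binary operation $x+y:=d^B(x,0,y)$, where $0$ is the $\Delta_{\alpha1}$-class containing the diagonal. Then there exist maps $T_f:(A/\alpha)^{\operatorname{ar}f}\to B$ ($f\in\tau$) such that \[A/[\alpha,1_A]\cong B\otimes^{T}A/\alpha.\]
   Context: All algebras are in the sense of universal algebra, with signature $\tau$. For $\alpha,\beta\in\operatorname{Con}A$, $[\alpha,\beta]$ is the term-condition (TC) commutator; $1_A$ is the total relation. $A(\alpha)=\{(x,y)\in A\times A:(x,y)\in\alpha\}$ is $\alpha$ viewed as a subalgebra of $A\times A$; $\Delta_{\alpha\beta}$ is the congruence of $A(\alpha)$ generated by $\{((u,u),(v,v)):(u,v)\in\beta\}$. A difference term for $\mathcal V$ is a ternary term $d$ such that for every $A\in\mathcal V$, $\theta\in\operatorname{Con}A$, $(a,b)\in\theta$: $d(a,a,b)=b$ and $(d(a,b,b),a)\in[\theta,\theta]$ (every congruence modular variety has one). Given algebras $B,Q$ in the same signature $\tau$, a binary operation $+$ on $B$, and maps $T_f:Q^{\operatorname{ar}f}\to B$ ($f\in\tau$), the algebra $B\otimes^{T}Q$ has universe $B\times Q$ and operations $F_f((b_1,q_1),\dots,(b_n,q_n))=\big(f^B(b_1,\dots,b_n)+T_f(q_1,\dots,q_n),\,f^Q(q_1,\dots,q_n)\big)$. *)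

From Stdlib Require Import Relation_Definitions Relation_Operators IndefiniteDescription.
From mathcomp Require Import all_boot.
Set Implicit Arguments. Unset Strict Implicit. Unset Printing Implicit Defensive.

Record signature := Signature { sym : Type; ar : sym -> nat }.

Record algebra (S : signature) := Algebra {
  carrier :> Type;
  op : forall f : sym S, ('I_(ar f) -> carrier) -> carrier }.
Arguments Algebra {S} carrier op.
Arguments op {S} a f _ : rename.

Section UA.
Variable S : signature.

Definition compatible (A : algebra S) (R : A -> A -> Prop) :=
  forall f (a b : 'I_(ar f) -> A), (forall i, R (a i) (b i)) -> R (op A f a) (op A f b).

Definition is_cong (A : algebra S) (R : A -> A -> Prop) :=
  equivalence A R /\ compatible R.

Definition rel_sub (T : Type) (R1 R2 : T -> T -> Prop) := forall x y, R1 x y -> R2 x y.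
Definition rel_eq (T : Type) (R1 R2 : T -> T -> Prop) := rel_sub R1 R2 /\ rel_sub R2 R1.
Definition cmeet (T : Type) (R1 R2 : T -> T -> Prop) := fun x y => R1 x y /\ R2 x y.
Definition cjoin (T : Type) (R1 R2 : T -> T -> Prop) :=
  clos_trans T (fun x y => R1 x y \/ R2 x y).
Definition total_rel (T : Type) : T -> T -> Prop := fun _ _ => True.

Definition modular_cong (A : algebra S) :=
  forall a b c : A -> A -> Prop, is_cong a -> is_cong b -> is_cong c ->
    rel_sub a c -> rel_eq (cmeet (cjoin a b) c) (cjoin a (cmeet b c)).

Definition cg (A : algebra S) (R : A -> A -> Prop) : A -> A -> Prop :=
  fun x y => forall th, is_cong th -> rel_sub R th -> th x y.

Inductive term : Type :=
| Var of nat
| App (f : sym S) of ('I_(ar f) -> term).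

Fixpoint eval (A : algebra S) (v : nat -> A) (t : term) : A :=
  match t with
  | Var n => v n
  | App f ts => op A f (fun i => eval v (ts i))
  end.

Fixpoint vars_lt (n : nat) (t : term) : Prop :=
  match t with
  | Var i => i < n
  | App f ts => forall i, vars_lt n (ts i)
  end.

Definition app3 (A : algebra S) (t : term) (x y z : A) : A :=
  eval (fun i => match i with 0 => x | 1 => y | _ => z end) t.

(* A satisfies all identities s = t with E s t; a variety is Mod(E). *)
Definition satisfies (A : algebra S) (E : term -> term -> Prop) :=
  forall s t, E s t -> forall v : nat -> A, eval v s = eval v t.

Definition congruence_modular (E : term -> term -> Prop) :=
  forall A : algebra S, satisfies A E -> modular_cong A.

Definition mix (A : Type) (P : nat -> bool) (u w : nat -> A) : nat -> A :=
  fun i => if P i then u i else w i.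

(* C(a,b;d): for every term t(xbar,ybar) (xbar = variables with P),
   xbar-tuples u a v, ybar-tuples w b z:
   t(u,w) d t(u,z) -> t(v,w) d t(v,z). *)
Definition centralizes (A : algebra S) (a b d : A -> A -> Prop) :=
  forall (t : term) (P : nat -> bool) (u v w z : nat -> A),
    (forall i, a (u i) (v i)) -> (forall i, b (w i) (z i)) ->
    d (eval (mix P u w) t) (eval (mix P u z) t) ->
    d (eval (mix P v w) t) (eval (mix P v z) t).

Definition commutator (A : algebra S) (a b : A -> A -> Prop) : A -> A -> Prop :=
  fun x y => forall d, is_cong d -> centralizes a b d -> d x y.

Definition is_difference_term (E : term -> term -> Prop) (d : term) :=
  vars_lt 3 d /\
  forall A : algebra S, satisfies A E ->
  forall th : A -> A -> Prop, is_cong th ->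
  forall a b : A, th a b ->
    app3 d a a b = b /\ commutator th th (app3 d a b b) a.

Definition pairs (A : algebra S) (al : A -> A -> Prop) := {p : A * A | al p.1 p.2}.

Definition pairs_op (A : algebra S) (al : A -> A -> Prop) (H : is_cong al)
  (f : sym S) (ps : 'I_(ar f) -> pairs al) : pairs al :=
  exist (fun p : A * A => al p.1 p.2)
    (op A f (fun i => (proj1_sig (ps i)).1), op A f (fun i => (proj1_sig (ps i)).2))
    (proj2 H f _ _ (fun i => proj2_sig (ps i))).

Definition sub_alg (A : algebra S) (al : A -> A -> Prop) (H : is_cong al) : algebra S :=
  Algebra (pairs al) (pairs_op H).

Definition Delta (A : algebra S) (al : A -> A -> Prop) (H : is_cong al)
  (be : A -> A -> Prop) : sub_alg H -> sub_alg H -> Prop :=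
  cg (fun p q : sub_alg H => exists u v, be u v /\
        proj1_sig p = (u, u) /\ proj1_sig q = (v, v)).

Definition qcarrier (A : Type) (th : A -> A -> Prop) := {X : A -> Prop | exists a, X = th a}.

Definition cls (A : Type) (th : A -> A -> Prop) (a : A) : qcarrier th :=
  exist (fun X => exists a, X = th a) (th a) (ex_intro _ a erefl).

Definition repr (A : Type) (th : A -> A -> Prop) (X : qcarrier th) : A :=
  proj1_sig (constructive_indefinite_description _ (proj2_sig X)).

Definition quot_op (A : algebra S) (th : A -> A -> Prop) (f : sym S)
  (xs : 'I_(ar f) -> qcarrier th) : qcarrier th :=
  cls th (op A f (fun i => repr (xs i))).

Definition quot (A : algebra S) (th : A -> A -> Prop) : algebra S :=
  Algebra (qcarrier th) (@quot_op A th).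

Definition Balg (A : algebra S) (al : A -> A -> Prop) (H : is_cong al) : algebra S :=
  @quot (sub_alg H) (@Delta A al H (@total_rel A)).

Definition diag_elt (A : algebra S) (al : A -> A -> Prop) (H : is_cong al) (a : A)
  : sub_alg H :=
  exist (fun p : A * A => al p.1 p.2) (a, a) (Relation_Definitions.equiv_refl _ _ (proj1 H) a).

(* 0 := the Delta_{al,1}-class containing the diagonal; we name it as the
   class of (a,a) for a = first coordinate of a representative of x, so that
   it is defined whenever B is inhabited (all diagonal pairs are in one class). *)
Definition zeroB (A : algebra S) (al : A -> A -> Prop) (H : is_cong al)
  (x : Balg H) : Balg H :=
  cls _ (diag_elt H (proj1_sig (repr x)).1).

Definition plusB (A : algebra S) (al : A -> A -> Prop) (H : is_cong al)
  (d : term) (x y : Balg H) : Balg H :=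
  @app3 (Balg H) d x (zeroB x) y.

Definition otimes_op (B Q : algebra S) (plus : B -> B -> B)
  (T : forall f : sym S, ('I_(ar f) -> Q) -> B)
  (f : sym S) (xs : 'I_(ar f) -> (B * Q)%type) : (B * Q)%type :=
  (plus (op B f (fun i => (xs i).1)) (T f (fun i => (xs i).2)),
   op Q f (fun i => (xs i).2)).

Definition otimes (B Q : algebra S) (plus : B -> B -> B)
  (T : forall f : sym S, ('I_(ar f) -> Q) -> B) : algebra S :=
  Algebra (B * Q)%type (otimes_op plus T).

Definition is_hom (A B : algebra S) (h : A -> B) :=
  forall f (xs : 'I_(ar f) -> A), h (op A f xs) = op B f (fun i => h (xs i)).

Definition isomorphic (A B : algebra S) :=
  exists h : A -> B, is_hom h /\ bijective h.

End UA.

(* Theorem 2.6.  Let alpha be a congruence of an algebra A in a congruence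
   modular variety with difference term d, theta = [alpha,1] and
   Delta = Delta_{alpha,1}.  The key fact is that, for c alpha a,
       (c,a) Delta (c,b)  <->  a theta b                          (Drel_comm).
   "<-": kappa(a,b) := "(c,a) Delta (c,b) for all c alpha a" is a congruence
   (by Gumm's shifting lemma, a consequence of modularity) which satisfies
   C(alpha,1;kappa), so theta <= kappa.  "->": rho((x,y),(x',y')) :=
   "d(y,x,z) theta d(y',x',z) for all z" is a congruence of A(alpha) (by the
   term condition for one suitable term) containing the diagonal, so
   Delta <= rho.  With (x,y) Delta (c, d(y,x,c)) it follows that
   a/theta |-> ((r(a),a)/Delta, a/alpha), r choosing representatives of
   alpha-classes, is bijective with inverse ((x,y)/Delta, q) |-> d(y,x,r q)/theta,
   and a homomorphism for T_f(q) := (r(f(r q)), f(r q))/Delta, since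
   (y,z) + (x,y) = (x,z) in B. *)

From Pilot Require Import Defs.
From mathcomp Require Import all_boot zify.
From Stdlib Require Import Relation_Definitions Relation_Operators
  IndefiniteDescription ProofIrrelevance FunctionalExtensionality PropExtensionality.
Set Implicit Arguments. Unset Strict Implicit. Unset Printing Implicit Defensive.

Lemma sig_ext (T : Type) (P : T -> Prop) (p q : {x | P x}) :
  proj1_sig p = proj1_sig q -> p = q.
Proof. case: p q => [x hx] [y hy] /= exy; subst y; f_equal; exact: proof_irrelevance. Qed.

Section Congruences.
Variable S : signature.
Implicit Types M N : algebra S.

Section Basics.
Variables (M : algebra S) (r : M -> M -> Prop) (Hr : is_cong r).

Lemma cong_refl x : r x x.
Proof. exact: equiv_refl _ _ (proj1 Hr) x. Qed.

Lemma cong_sym x y : r x y -> r y x.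
Proof. exact: equiv_sym _ _ (proj1 Hr) x y. Qed.

Lemma cong_trans x y z : r x y -> r y z -> r x z.
Proof. exact: equiv_trans _ _ (proj1 Hr) x y z. Qed.

Lemma eval_cong (v v' : nat -> M) : (forall n, r (v n) (v' n)) ->
  forall t, r (eval v t) (eval v' t).
Proof. by move=> Hv; elim=> [n|f ts IH] //=; apply: (proj2 Hr). Qed.

Lemma app3_cong t a a' b b' c c' : r a a' -> r b b' -> r c c' ->
  r (app3 t a b c) (app3 t a' b' c').
Proof. by move=> ha hb hc; apply: eval_cong => -[|[|n]]. Qed.

End Basics.

Lemma eq_cong M : is_cong (@eq M).
Proof.
split; first by split; [move=> x | move=> x y z -> | move=> x y ->].
by move=> f a b Hab; congr (op M f _); apply: functional_extensionality.
Qed.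

Lemma total_cong M : is_cong (@total_rel M).
Proof. by split; first split. Qed.

Lemma meet_cong M (r s : M -> M -> Prop) :
  is_cong r -> is_cong s -> is_cong (cmeet r s).
Proof.
move=> Hr Hs; split; first split.
- by move=> x; split; apply: cong_refl.
- by move=> x y z [h1 h2] [h3 h4]; split; [exact: (cong_trans Hr h1 h3)
                                            | exact: (cong_trans Hs h2 h4)].
- by move=> x y [h1 h2]; split; apply: cong_sym.
- by move=> f a b Hab; split; [apply: (proj2 Hr) | apply: (proj2 Hs)] => i; case: (Hab i).
Qed.

Lemma preimage_cong M N (h : M -> N) (r : N -> N -> Prop) :
  is_hom h -> is_cong r -> is_cong (fun x y => r (h x) (h y)).
Proof.
move=> Hh Hr; split; first split.
- by move=> x; apply: cong_refl.
- by move=> x y z; apply: cong_trans.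
- by move=> x y; apply: cong_sym.
- by move=> f a b Hab; rewrite !Hh; apply: (proj2 Hr).
Qed.

Lemma cg_cong M (R : M -> M -> Prop) : is_cong (cg R).
Proof.
split; first split.
- by move=> x th Hth _; apply: cong_refl.
- move=> x y z h1 h2 th Hth HR; exact: (cong_trans Hth (h1 th Hth HR) (h2 th Hth HR)).
- move=> x y h th Hth HR; exact: (cong_sym Hth (h th Hth HR)).
- by move=> f a b Hab th Hth HR; apply: (proj2 Hth) => i; apply: Hab.
Qed.

Lemma cg_gen M (R : M -> M -> Prop) x y : R x y -> cg R x y.
Proof. by move=> h th _ HR; apply: HR. Qed.

Lemma cg_least M (R r : M -> M -> Prop) : is_cong r -> rel_sub R r -> rel_sub (cg R) r.
Proof. by move=> Hr HR x y; apply. Qed.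

Lemma comm_cong M (a b : M -> M -> Prop) : is_cong (commutator a b).
Proof.
split; first split.
- by move=> x r Hr _; apply: cong_refl.
- move=> x y z h1 h2 r Hr HC; exact: (cong_trans Hr (h1 r Hr HC) (h2 r Hr HC)).
- move=> x y h r Hr HC; exact: (cong_sym Hr (h r Hr HC)).
- by move=> f x y Hxy r Hr HC; apply: (proj2 Hr) => i; apply: Hxy.
Qed.

Lemma comm_centralizes M (a b : M -> M -> Prop) : centralizes a b (commutator a b).
Proof. by move=> t P u v w z Hu Hw H r Hr HC; apply: HC Hu Hw (H r Hr HC). Qed.

Lemma comm_least M (a b r : M -> M -> Prop) :
  is_cong r -> centralizes a b r -> rel_sub (commutator a b) r.
Proof. by move=> Hr HC x y; apply. Qed.

Lemma comm_mono M (a b b' : M -> M -> Prop) :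
  rel_sub b b' -> rel_sub (commutator a b) (commutator a b').
Proof.
move=> Hb x y Hxy r Hr HC; apply: Hxy Hr _ => t P u v w z Hu Hw.
by apply: HC => // i; apply: Hb.
Qed.

End Congruences.

Section Pairs.
Variables (S : signature) (M : algebra S) (r : M -> M -> Prop) (Hr : is_cong r).
Local Notation D := (sub_alg Hr).

Definition pr1 (P : D) : M := (proj1_sig P).1.
Definition pr2 (P : D) : M := (proj1_sig P).2.

Lemma pr_pair (P : D) : (pr1 P, pr2 P) = proj1_sig P.
Proof. by rewrite /pr1 /pr2; case: (proj1_sig P). Qed.

Lemma pr1_hom : is_hom pr1. Proof. by []. Qed.
Lemma pr2_hom : is_hom pr2. Proof. by []. Qed.

Definition swap (P : D) : D :=
  exist (fun p : M * M => r p.1 p.2) (pr2 P, pr1 P) (cong_sym Hr (proj2_sig P)).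

Lemma swap_hom : is_hom swap. Proof. by move=> f xs; apply: sig_ext. Qed.

Lemma eval_sub (v : nat -> D) t :
  proj1_sig (eval v t) = (eval (fun n => pr1 (v n)) t, eval (fun n => pr2 (v n)) t).
Proof.
elim: t => [n|f ts IH] /=; first by rewrite pr_pair.
by f_equal; f_equal; apply: functional_extensionality => i; rewrite IH.
Qed.

Lemma app3_sub t (a b c : D) :
  proj1_sig (app3 t a b c) =
  (app3 t (pr1 a) (pr1 b) (pr1 c), app3 t (pr2 a) (pr2 b) (pr2 c)).
Proof.
by rewrite /app3 eval_sub; congr (eval _ _, eval _ _);
  apply: functional_extensionality => -[|[|n]].
Qed.

(* M(r) is a subalgebra of M x M, hence lies in every variety containing M. *)
Lemma sat_sub E : satisfies M E -> satisfies D E.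
Proof.
move=> HM s t Est v; apply: sig_ext; rewrite !eval_sub.
by rewrite (HM s t Est (fun n => pr1 (v n))) (HM s t Est (fun n => pr2 (v n))).
Qed.

End Pairs.

Lemma join_least S (M : algebra S) (r s t : M -> M -> Prop) :
  is_cong t -> rel_sub r t -> rel_sub s t -> rel_sub (cjoin r s) t.
Proof.
move=> Ht Hr Hs x y; elim=> [u v [h|h] | u v w _ IH1 _ IH2];
  [exact: Hr | exact: Hs | exact: (cong_trans Ht IH1 IH2)].
Qed.

(* The shifting lemma of Gumm: in a congruence modular variety, if
   a /\ b <= c, then in every square x-u-v-y with vertical a-edges x a u,
   y a v and horizontal b-edges x b y, u b v, the c-relation shifts from the
   edge x-u to the edge y-v.  Modularity is applied in the algebra M(b). *)
Lemma shifting S E (HCM : congruence_modular E) (M : algebra S) (HM : satisfies M E)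
  (a b c : M -> M -> Prop) : is_cong a -> is_cong b -> is_cong c ->
  rel_sub (cmeet a b) c ->
  forall x u y v, a x u -> a y v -> b x y -> b u v -> c x u -> c y v.
Proof.
move=> Ha Hb Hc Habc x u y v axu ayv bxy buv cxu.
pose mk (p q : M) (h : b p q) := exist (fun z : M * M => b z.1 z.2) (p, q) h.
pose diag := fun P Q : sub_alg Hb => exists p q, cmeet a c p q /\
  proj1_sig P = (p, p) /\ proj1_sig Q = (q, q).
pose Dp := cg diag.
pose ker1 := fun P Q : sub_alg Hb => pr1 P = pr1 Q.
pose a2 := cmeet (fun P Q : sub_alg Hb => a (pr1 P) (pr1 Q)) (fun P Q => a (pr2 P) (pr2 Q)).
pose c2 := fun P Q : sub_alg Hb => c (pr2 P) (pr2 Q).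
have Hker1 : is_cong ker1 := preimage_cong (@pr1_hom _ _ _ Hb) (eq_cong M).
have Ha2 : is_cong a2.
  by apply: meet_cong; apply: preimage_cong Ha; [exact: pr1_hom | exact: pr2_hom].
have Hc2 : is_cong c2 := preimage_cong (@pr2_hom _ _ _ Hb) Hc.
have Dp_a2 : rel_sub Dp a2.
  apply: cg_least Ha2 _ => P Q [p [q [[hpq _] [eP eQ]]]].
  by rewrite /a2 /cmeet /pr1 /pr2 eP eQ.
have Dp_c2 : rel_sub Dp c2.
  apply: cg_least Hc2 _ => P Q [p [q [[_ hpq] [eP eQ]]]].
  by rewrite /c2 /pr2 eP eQ.
have ker1_c2 : rel_sub (cmeet ker1 a2) c2.
  move=> [[p1 p2] hp] [[q1 q2] hq]; rewrite /ker1 /a2 /c2 /pr1 /pr2 => -[/= e [_ h2]].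
  subst q1; apply: Habc; split=> //=.
  exact: (cong_trans Hb (cong_sym Hb hp) hq).
have Hxy_uv : cjoin Dp ker1 (mk _ _ bxy) (mk _ _ buv).
  apply: (t_trans _ _ _ (mk x x (cong_refl Hb x))); first by apply: t_step; right.
  apply: (t_trans _ _ _ (mk u u (cong_refl Hb u))); last by apply: t_step; right.
  by apply: t_step; left; apply: cg_gen; exists x, u.
have Hmod := proj1 (HCM _ (sat_sub (Hr := Hb) HM) Dp ker1 a2 (cg_cong _) Hker1 Ha2 Dp_a2).
have := Hmod _ _ (conj Hxy_uv (conj axu ayv)).
exact: (join_least Hc2 Dp_c2 ker1_c2).
Qed.

Section Quotients.
Variables (T : Type) (r : T -> T -> Prop) (Hr : equivalence T r).

Lemma cls_repr (X : qcarrier r) : cls r (Defs.repr X) = X.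
Proof.
apply: sig_ext; rewrite /Defs.repr /=.
by case: (constructive_indefinite_description _ _).
Qed.

Lemma cls_eq a b : r a b -> cls r a = cls r b.
Proof.
move=> h; apply: sig_ext; apply: functional_extensionality => x /=.
apply: propositional_extensionality; split=> h'.
- exact: equiv_trans _ _ Hr b a x (equiv_sym _ _ Hr a b h) h'.
- exact: equiv_trans _ _ Hr a b x h h'.
Qed.

Lemma cls_inj a b : cls r a = cls r b -> r a b.
Proof.
move=> h; have /= -> : proj1_sig (cls r a) = proj1_sig (cls r b) by rewrite h.
exact: equiv_refl _ _ Hr b.
Qed.

Lemma repr_cls a : r (Defs.repr (cls r a)) a.
Proof. apply: equiv_sym _ _ Hr _ _ (cls_inj _); by rewrite cls_repr. Qed.

End Quotients.

Lemma app3_quot S (M : algebra S) (r : M -> M -> Prop) (Hr : is_cong r) t (a b c : M) :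
  app3 (A := quot r) t (cls r a) (cls r b) (cls r c) = cls r (app3 t a b c).
Proof.
have eval_quot (v : nat -> M) u : eval (A := quot r) (fun n => cls r (v n)) u = cls r (eval v u).
  elim: u => [n|f ts IH] //=; apply: cls_eq (proj1 Hr) _ _ _.
  by apply: (proj2 Hr) => i; rewrite IH; apply: repr_cls (proj1 Hr) _.
by rewrite /app3 -eval_quot; congr eval; apply: functional_extensionality => -[|[|n]].
Qed.

Lemma quot_op_cls S (M : algebra S) (r : M -> M -> Prop) (Hr : is_cong r) f
  (a : 'I_(ar f) -> M) : @quot_op S M r f (fun i => cls r (a i)) = cls r (op M f a).
Proof.
apply: cls_eq (proj1 Hr) _ _ _; apply: (proj2 Hr) => i.
exact: repr_cls (proj1 Hr) _.
Qed.

Fixpoint subst S (sg : nat -> term S) (t : term S) : term S :=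
  match t with
  | Var n => sg n
  | App f ts => @App S f (fun i => subst sg (ts i))
  end.

Lemma eval_subst S (M : algebra S) (v : nat -> M) sg t :
  eval v (subst sg t) = eval (fun n => eval v (sg n)) t.
Proof.
elim: t => [n|f ts IH] //=.
by congr (op M f _); apply: functional_extensionality => i; apply: IH.
Qed.

Definition subst3 S (t a b c : term S) : term S :=
  subst (fun n => match n with 0 => a | 1 => b | _ => c end) t.

Lemma eval_subst3 S (M : algebra S) (v : nat -> M) t a b c :
  eval v (subst3 t a b c) = app3 t (eval v a) (eval v b) (eval v c).
Proof.
rewrite /subst3 eval_subst /app3; congr eval.
by apply: functional_extensionality => -[|[|n]].
Qed.

Section Layout.
Variables (S : signature) (M : algebra S).

(* An assignment of four kinds of values to the variables: for i < k, the
   variables 4i, 4i+2, 4i+1 receive a_i, b_i, c_i; variable 3 (and every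
   unused variable) receives e. *)
Definition entry k (v : 'I_k -> M) (dflt : M) (n : nat) : M :=
  if insub n is Some i then v i else dflt.

Definition quad k (a b c : 'I_k -> M) (e : M) (n : nat) : M :=
  match n %% 4 with
  | 0 => entry a e (n %/ 4)
  | 1 => entry c e (n %/ 4)
  | 2 => entry b e (n %/ 4)
  | _ => e
  end.

Definition abvar (n : nat) : bool := (n %% 4 == 0) || (n %% 4 == 2).

Lemma mix_quad k (a b c a' b' c' : 'I_k -> M) e :
  mix abvar (quad a b c e) (quad a' b' c' e) = quad a b c' e.
Proof.
apply: functional_extensionality => n; rewrite /mix /abvar /quad.
by case: (n %% 4) => [|[|[|m]]].
Qed.

Lemma quad_rel (R : M -> M -> Prop) k {a b a' b' c : 'I_k -> M} {e : M} :
  (forall x, R x x) -> (forall i, R (a i) (a' i)) -> (forall i, R (b i) (b' i)) ->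
  forall n, R (quad a b c e n) (quad a' b' c e n).
Proof.
move=> Rrefl Ra Rb n; rewrite /quad /entry.
by case: (n %% 4) => [|[|[|m]]]; case: (insub (n %/ 4) : option 'I_k).
Qed.

Variable d : term S.

Definition compat_term (f : sym S) : term S :=
  subst3 d (@App S f (fun i : 'I_(ar f) =>
                     subst3 d (Var S (4 * i)) (Var S (4 * i + 2)) (Var S (4 * i + 1))))
           (@App S f (fun i : 'I_(ar f) => Var S (4 * i + 1))) (Var S 3).

Lemma eval_compat_term f (a b c : 'I_(ar f) -> M) e :
  eval (quad a b c e) (compat_term f) =
  app3 d (op M f (fun i => app3 d (a i) (b i) (c i))) (op M f c) e.
Proof.
have at_var (i : 'I_(ar f)) k : k < 4 -> (4 * i + k) %/ 4 = i /\ (4 * i + k) %% 4 = k.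
  by move=> hk; split; lia.
rewrite /compat_term eval_subst3 /=; congr (app3 d (op M f _) (op M f _) _);
  apply: functional_extensionality => i; rewrite ?eval_subst3 /= /quad.
- have [q0 r0] := at_var i 0 isT; have [q1 r1] := at_var i 1 isT.
  have [q2 r2] := at_var i 2 isT.
  by rewrite r2 q2 r1 q1 -[4 * i]addn0 r0 q0 /entry !valK.
- have [q1 r1] := at_var i 1 isT; by rewrite r1 q1 /entry valK.
Qed.

End Layout.

Section Main.
Variables (S : signature) (E : term S -> term S -> Prop) (d : term S)
  (HCM : congruence_modular E) (Hd : is_difference_term E d)
  (A : algebra S) (HA : satisfies A E)
  (al : A -> A -> Prop) (Hal : is_cong al).

Local Notation th := (commutator al (@total_rel A)).
Local Notation C := (sub_alg Hal).
Local Notation Dl := (@Delta S A al Hal (@total_rel A)).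

Let Hth : is_cong th := comm_cong al (@total_rel A).
Let HDl : is_cong Dl := cg_cong _.
Let HC : satisfies C E := sat_sub HA.

Lemma d_idem (M : algebra S) (HM : satisfies M E) (a b : M) : app3 d a a b = b.
Proof. exact: proj1 (proj2 Hd M HM _ (total_cong M) a b I). Qed.

Lemma d_comm a b : al a b -> th (app3 d a b b) a.
Proof.
move=> h; apply: (@comm_mono _ _ al al) => //.
exact: proj2 (proj2 Hd A HA al Hal a b h).
Qed.

Definition mkC (x y : A) (h : al x y) : C := exist (fun p : A * A => al p.1 p.2) (x, y) h.

Lemma Delta_diag u v : Dl (diag_elt Hal u) (diag_elt Hal v).
Proof. by apply: cg_gen; exists u, v. Qed.

Definition Drel (p q : A * A) : Prop :=
  exists P Q : C, proj1_sig P = p /\ proj1_sig Q = q /\ Dl P Q.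

Lemma DrelP (P Q : C) : Dl P Q <-> Drel (proj1_sig P) (proj1_sig Q).
Proof.
split=> [H | [P' [Q' [eP [eQ H]]]]]; first by exists P, Q.
by rewrite -(sig_ext eP) -(sig_ext eQ).
Qed.

Lemma Drel_alpha p q : Drel p q -> al p.1 p.2 /\ al q.1 q.2.
Proof.
by move=> [P [Q [<- [<- _]]]]; split; [exact: (proj2_sig P) | exact: (proj2_sig Q)].
Qed.

Lemma Drel_sym p q : Drel p q -> Drel q p.
Proof.
by move=> [P [Q [eP [eQ H]]]]; exists Q, P; do 2 split=> //; exact: (cong_sym HDl H).
Qed.

Lemma Drel_trans p q s : Drel p q -> Drel q s -> Drel p s.
Proof.
move=> [P [Q [eP [eQ H1]]]] [Q' [R [eQ' [eR H2]]]].
exists P, R; do 2 split=> //; apply: (cong_trans HDl H1 _).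
by rewrite (sig_ext (etrans eQ (esym eQ'))).
Qed.

Lemma Drel_swap a b c e : Drel (a, b) (c, e) -> Drel (b, a) (e, c).
Proof.
move=> [P [Q [eP [eQ H]]]].
have Hsw : rel_sub Dl (fun P Q => Dl (swap P) (swap Q)).
  apply: cg_least (preimage_cong (@swap_hom _ _ _ Hal) HDl) _.
  move=> P' Q' [u [v [_ [eP' eQ']]]].
  have -> : swap P' = diag_elt Hal u by apply: sig_ext; rewrite /= /pr1 /pr2 eP'.
  have -> : swap Q' = diag_elt Hal v by apply: sig_ext; rewrite /= /pr1 /pr2 eQ'.
  exact: Delta_diag.
by move/DrelP: (Hsw P Q H); rewrite /= /pr1 /pr2 eP eQ.
Qed.

(* Shifting in A(al): if (e,a) Delta (e,b) then (c,a) Delta (c,b) for every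
   c al a; the kernels of the two projections meet in the identity. *)
Lemma Drel_shift e a b c : Drel (e, a) (e, b) -> al c a -> Drel (c, a) (c, b).
Proof.
move=> H hca; have [/= hea /= heb] := Drel_alpha H.
have hcb : al c b.
  exact: (cong_trans Hal hca (cong_trans Hal (cong_sym Hal hea) heb)).
pose ker1 := fun P Q : C => pr1 P = pr1 Q.
pose ker2 := fun P Q : C => pr2 P = pr2 Q.
have Hker1 : is_cong ker1 := preimage_cong (@pr1_hom _ _ _ Hal) (eq_cong A).
have Hker2 : is_cong ker2 := preimage_cong (@pr2_hom _ _ _ Hal) (eq_cong A).
have Hmeet : rel_sub (cmeet ker1 ker2) Dl.
  move=> P Q [e1 e2]; have -> : P = Q by apply: sig_ext; rewrite -!pr_pair e1 e2.
  exact: (cong_refl HDl).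
exists (mkC hca), (mkC hcb); do 2 split=> //.
apply: (shifting HCM HC Hker1 Hker2 HDl Hmeet (x := mkC hea) (u := mkC heb)) => //.
exact/DrelP.
Qed.

(* kappa(a,b): a al b and (c,a) Delta (c,b) for all c al a.  It is a
   congruence centralizing al over 1, hence it contains [al,1]. *)
Definition kappa (a b : A) : Prop := al a b /\ forall c, al c a -> Drel (c, a) (c, b).

Lemma kappa_of_Drel e a b : Drel (e, a) (e, b) -> kappa a b.
Proof.
move=> H; have [/= hea /= heb] := Drel_alpha H.
split; last by move=> c hc; apply: Drel_shift H hc.
exact: (cong_trans Hal (cong_sym Hal hea) heb).
Qed.

Lemma kappa_cong : is_cong kappa.
Proof.
split; first split.
- move=> a; split; first exact: cong_refl.
  by move=> c hc; exists (mkC hc), (mkC hc); do 2 split=> //; apply: (cong_refl HDl).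
- move=> a b c [hab kab] [hbc kbc]; split; first exact: (cong_trans Hal hab hbc).
  move=> e he; apply: Drel_trans (kab e he) (kbc e _).
  exact: (cong_trans Hal he hab).
- move=> a b [hab kab]; split; first exact: cong_sym.
  move=> c hc; apply/Drel_sym/kab.
  exact: (cong_trans Hal hc (cong_sym Hal hab)).
- move=> f a b Hab; apply: (@kappa_of_Drel (op A f a)).
  have hab i : al (a i) (b i) by case: (Hab i).
  have := proj2 HDl f (fun i => mkC (cong_refl Hal (a i))) (fun i => mkC (hab i)).
  move/(_ _)/DrelP; apply=> i; apply/DrelP.
  by case: (Hab i) => _; apply; apply: cong_refl.
Qed.

Lemma kappa_centralizes : centralizes al (@total_rel A) kappa.
Proof.
move=> t P u v w z Hu _ [hal hk].
pose V (x : nat -> A) n := if P n then mkC (Hu n) else diag_elt Hal (x n).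
have H : Dl (eval (V w) t) (eval (V z) t).
  by apply: eval_cong HDl _ _ _ _ => n; rewrite /V; case: (P n);
    [apply: cong_refl | apply: Delta_diag].
have Vcoord x : (fun n => pr1 (V x n)) = mix P u x /\ (fun n => pr2 (V x n)) = mix P v x.
  by split; apply: functional_extensionality => n; rewrite /V /mix; case: (P n).
move/DrelP: H; rewrite !eval_sub.
case: (Vcoord w) => -> ->; case: (Vcoord z) => -> -> H.
have [_ /= hz] := Drel_alpha H.
apply: (@kappa_of_Drel (eval (mix P u w) t)); apply: Drel_trans H _.
apply/Drel_sym/Drel_swap/hk.
exact: (cong_trans Hal (cong_sym Hal hz) (cong_sym Hal hal)).
Qed.

Lemma comm_sub_kappa : rel_sub th kappa.
Proof. exact: comm_least kappa_cong kappa_centralizes. Qed.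

Lemma comm_sub_alpha x y : th x y -> al x y.
Proof. by case/comm_sub_kappa. Qed.

(* rho(P,Q): the "differences" d(y,x,-) of the pairs P = (x,y) and Q agree
   modulo [al,1] at every point.  It is a congruence of A(al) containing the
   diagonal pairs, hence it contains Delta_{al,1}.  Compatibility is the one
   place where the term condition is used directly, with the term
   d(f(d(x_a,x_b,x_c)), f(x_c), x_e). *)
Definition rho (P Q : C) : Prop :=
  forall z, th (app3 d (pr2 P) (pr1 P) z) (app3 d (pr2 Q) (pr1 Q) z).

Lemma rho_compat f (x y x' : 'I_(ar f) -> A) z : (forall i, al (x i) (y i)) ->
  th (app3 d (op A f (fun i => app3 d (y i) (x i) (x i))) (op A f x) z)
     (app3 d (op A f (fun i => app3 d (y i) (x i) (x' i))) (op A f x') z).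
Proof.
move=> hxy.
have := @comm_centralizes _ A al (@total_rel A) (compat_term d f) abvar
  (quad x x x z) (quad y x x z) (quad x x x z) (quad x x x' z)
  (quad_rel (cong_refl Hal) hxy (fun i => cong_refl Hal (x i))) (fun _ => I).
rewrite !mix_quad !eval_compat_term; apply.
have idem (v : 'I_(ar f) -> A) : (fun i => app3 d (x i) (x i) (v i)) = v.
  by apply: functional_extensionality => i; apply: d_idem.
by rewrite !idem !(d_idem HA); apply: (cong_refl Hth).
Qed.

Lemma rho_cong : is_cong rho.
Proof.
split; first split.
- by move=> P z; apply: (cong_refl Hth).
- by move=> P Q R h1 h2 z; exact: (cong_trans Hth (h1 z) (h2 z)).
- by move=> P Q h z; exact: (cong_sym Hth (h z)).
move=> f ps qs Hr z; rewrite /rho !pr1_hom !pr2_hom.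
set x := fun i => pr1 (ps i); set y := fun i => pr2 (ps i).
set x' := fun i => pr1 (qs i); set y' := fun i => pr2 (qs i).
have hxy i : al (x i) (y i) := proj2_sig (ps i).
have hy' i : th (app3 d (y i) (x i) (x' i)) (y' i).
  apply: (cong_trans Hth (Hr i (x' i))).
  by apply: d_comm; apply: (cong_sym Hal); apply: (proj2_sig (qs i)).
apply: (cong_trans Hth _ (cong_trans Hth (rho_compat x' z hxy) _)).
- apply: (app3_cong Hth d _ (cong_refl Hth _) (cong_refl Hth _)).
  apply: (proj2 Hth) => i; apply: (cong_sym Hth).
  exact: d_comm (cong_sym Hal (hxy i)).
- apply: (app3_cong Hth d _ (cong_refl Hth _) (cong_refl Hth _)).
  exact: (proj2 Hth).
Qed.

Lemma Delta_sub_rho : rel_sub Dl rho.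
Proof.
apply: cg_least rho_cong _ => P Q [u [v [_ [eP eQ]]]] z.
by rewrite /pr1 /pr2 eP eQ /= !(d_idem HA); apply: (cong_refl Hth).
Qed.

Lemma Drel_comm {c a b : A} : al c a -> (Drel (c, a) (c, b) <-> th a b).
Proof.
move=> hca; split=> [H | h]; last by case: (comm_sub_kappa h) => _; apply.
have [/= _ hcb] := Drel_alpha H.
have /DrelP/Delta_sub_rho/(_ c) /= K : Drel (proj1_sig (mkC hca)) (proj1_sig (mkC hcb)) by [].
apply: (cong_trans Hth (cong_sym Hth (d_comm (cong_sym Hal hca)))).
exact: (cong_trans Hth K (d_comm (cong_sym Hal hcb))).
Qed.

(* The pair (x,y) is Delta-equivalent to (c, d(y,x,c)) for every c:
   every element of B has a representative with any prescribed first
   coordinate. *)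
Lemma Drel_translate x y c : al x y -> Drel (c, app3 d y x c) (x, y).
Proof.
move=> h.
have H : Dl (app3 d (mkC h) (diag_elt Hal x) (diag_elt Hal c))
            (app3 d (mkC h) (diag_elt Hal x) (diag_elt Hal x)).
  exact: (app3_cong HDl d (cong_refl HDl _) (cong_refl HDl _) (Delta_diag c x)).
move/DrelP: H; rewrite !app3_sub /pr1 /pr2 /= !(d_idem HA) => H; apply: Drel_trans H _.
have hyx := d_comm (cong_sym Hal h).
apply/(Drel_comm (cong_trans Hal h (cong_sym Hal (comm_sub_alpha hyx)))).
exact: hyx.
Qed.

(* The pairs (x,y) and (y,z) sum to (x,z) in B: the sum d^B(P, 0, Q) is
   represented by (x, d(z,y,y)), which is Delta-related to (x,z). *)
Lemma plusB_cls (P Q : C) x y z (hxz : al x z) :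
  proj1_sig P = (y, z) -> proj1_sig Q = (x, y) ->
  plusB d (H := Hal) (cls Dl P) (cls Dl Q) = cls Dl (mkC hxz).
Proof.
move=> eP eQ; rewrite /plusB /zeroB; move: (proj1_sig (Defs.repr _)).1 => w.
rewrite (app3_quot HDl); apply: cls_eq (proj1 HDl) _ _ _.
apply: (cong_trans HDl (app3_cong HDl d (cong_refl HDl P) (Delta_diag w y) (cong_refl HDl Q))).
apply/DrelP; rewrite app3_sub /pr1 /pr2 eP eQ /= (d_idem HA).
have hyz : al y z by move: (proj2_sig P); rewrite eP.
have hzy := d_comm (cong_sym Hal hyz).
apply/(Drel_comm (cong_trans Hal hxz (cong_sym Hal (comm_sub_alpha hzy)))).
exact: hzy.
Qed.

Definition lift (a : A) : C := mkC (repr_cls (proj1 Hal) a).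

Definition phi (a : A) : Balg Hal := cls Dl (lift a).

Lemma comm_cls_alpha a a' : th a a' -> cls al a = cls al a'.
Proof. by move/comm_sub_alpha; apply: cls_eq (proj1 Hal) _ _. Qed.

Lemma phi_comm a a' : th a a' -> phi a = phi a'.
Proof.
move=> h; apply: cls_eq (proj1 HDl) _ _ _; apply/DrelP => /=.
rewrite -(comm_cls_alpha h); apply/Drel_comm=> //.
exact: repr_cls (proj1 Hal) a.
Qed.

Definition twist f (q : 'I_(ar f) -> quot al) : Balg Hal :=
  phi (op A f (fun i => Defs.repr (q i))).

Definition iso (X : quot th) : Balg Hal * quot al :=
  (phi (Defs.repr X), cls al (Defs.repr X)).

Definition iso_inv (bq : Balg Hal * quot al) : quot th :=
  cls th (app3 d (pr2 (Defs.repr bq.1)) (pr1 (Defs.repr bq.1)) (Defs.repr bq.2)).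

Lemma iso_cls a : iso (cls th a) = (phi a, cls al a).
Proof.
have h := repr_cls (proj1 Hth) a.
by rewrite /iso (phi_comm h) (comm_cls_alpha h).
Qed.

Lemma iso_hom : @is_hom S (quot th) (otimes (plusB d (H := Hal)) twist) iso.
Proof.
move=> f xs; set a := fun i => Defs.repr (xs i).
rewrite [op _ f xs]/= /quot_op -/a iso_cls /iso /= /otimes_op /=.
rewrite /phi (quot_op_cls HDl) (quot_op_cls Hal); congr (_, _).
set y := op A f (fun i => Defs.repr (cls al (a i))).
have hyz : al y (op A f a).
  by apply: (proj2 Hal) => i; apply: repr_cls (proj1 Hal) _.
have hxz : al (Defs.repr (cls al y)) (op A f a).
  exact: (cong_trans Hal (repr_cls (proj1 Hal) y) hyz).
rewrite /twist /phi (plusB_cls (y := y) hxz) //.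
congr (cls Dl _); apply: sig_ext => /=.
by rewrite (cls_eq (proj1 Hal) hyz).
Qed.

Lemma iso_invK X : iso_inv (iso X) = X.
Proof.
rewrite /iso_inv /iso /= -[RHS]cls_repr; apply: cls_eq (proj1 Hth) _ _ _.
set a := Defs.repr X; set c := Defs.repr (cls al a); set P := Defs.repr (phi a).
have /DrelP HP : Dl P (lift a) := repr_cls (proj1 HDl) (lift a).
rewrite -pr_pair in HP; have [/= hP _] := Drel_alpha HP.
have HT := Drel_trans (Drel_translate c hP) HP.
have [/= hca _] := Drel_alpha HT.
exact/(Drel_comm hca).
Qed.

Lemma isoK bq : iso (iso_inv bq) = bq.
Proof.
case: bq => b q; rewrite /iso_inv iso_cls /=.
set P := Defs.repr b; set c := Defs.repr q; set a := app3 d (pr2 P) (pr1 P) c.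
have hP : al (pr1 P) (pr2 P) := proj2_sig P.
have ca : cls al a = q.
  rewrite -[RHS]cls_repr -/c; apply: cls_eq (proj1 Hal) _ _ _.
  rewrite /a -[X in al _ X](d_idem HA (pr1 P) c).
  exact: (app3_cong Hal d (cong_sym Hal hP) (cong_refl Hal _) (cong_refl Hal _)).
rewrite ca; congr (_, _).
rewrite /phi -[RHS]cls_repr -/P; apply: cls_eq (proj1 HDl) _ _ _.
apply/DrelP; rewrite /= ca -/c -pr_pair.
exact: Drel_translate.
Qed.

End Main.

Theorem theorem2p6 (S : signature) (E : term S -> term S -> Prop) (d : term S)
  (HCM : congruence_modular E) (Hd : is_difference_term E d)
  (A : algebra S) (HA : satisfies A E)
  (al : A -> A -> Prop) (Hal : is_cong al) :
  exists T : forall f : sym S, ('I_(ar f) -> quot al) -> Balg Hal,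
    isomorphic (quot (commutator al (@total_rel A)))
               (otimes (plusB d (H:=Hal)) T).
Proof.
exists (twist Hal), (iso Hal); split; first exact: (iso_hom HCM Hd HA Hal).
by exists (iso_inv d (Hal := Hal)) => [X | bq]; [apply: (iso_invK HCM Hd HA) | apply: (isoK HCM Hd HA)].
Qed.
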